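(* Let $N\geqslant 1$. The map $\mathfrak{s}:\Lambda(N)\to\mathcal{S}(N)$, $(\mu,\nu)\mapsto[\mu+\bar{\nu},\nu_{1}]$, is a bijection.
   Context: A partition $\alpha=(\alpha_1\geqslant\alpha_2\geqslant\dots\geqslant\alpha_p>0)$ has length $\ell(\alpha)=p$; the empty partition $\varnothing$ has length $0$; set $\alpha_i=0$ for $i>\ell(\alpha)$, and for partitions $\alpha,\beta$ let $\alpha+\beta$ be the partition with parts $\alpha_i+\beta_i$. $\alpha'$ denotes the conjugate (transposed) partition. $\mathcal{P}(N)$ is the set of partitions with at most $N$ parts, and $\Lambda(N)$ is the set of pairs $(\mu,\nu)$ of partitions with $\ell(\mu)+\ell(\nu)\leqslant N$. $\mathcal{S}(N)$ is the set of equivalence classes $[\alpha,t]$ of $\mathcal{P}(N)\times\mathbb{Z}_{\geqslant 0}$ under the relation $(\alpha,t)\sim(\beta,u)$ iff $t-u=\alpha_i-\beta_i$ for all $i=1,\dots,N$. For nonempty $\beta\in\mathcal{P}(N)$ with $q=\ell(\beta')=\beta_1$, define $\bar\beta=(N-\beta'_q,\dots,N-\beta'_1)'$ (zero entries discarded), i.e. the complement of $\beta$ in the $N\times q$ rectangle rotated by $180^\circ$; set $\bar\varnothing=\varnothing$. *)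

From mathcomp Require Import all_boot all_order all_algebra.
Set Implicit Arguments. Unset Strict Implicit. Unset Printing Implicit Defensive.
Import GRing.Theory Num.Theory.

Definition is_partition (a : seq nat) : bool :=
  sorted geq a && all (fun x => 0 < x) a.

(* alpha_i (1-based) = part a i.+1 ... we use 0-based: part a i = alpha_{i+1},
   and part a i = 0 beyond the length *)
Definition part (a : seq nat) (i : nat) : nat := nth 0 a i.

Definition conjp (a : seq nat) : seq nat :=
  [seq count (fun x => j < x) a | j <- iota 0 (head 0 a)].

Definition addp (a b : seq nat) : seq nat :=
  mkseq (fun i => part a i + part b i) (maxn (size a) (size b)).

Definition inP (N : nat) (a : seq nat) : bool :=
  is_partition a && (size a <= N).

Definition inLambda (N : nat) (mu nu : seq nat) : bool :=
  [&& is_partition mu, is_partition nu & size mu + size nu <= N].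

(* bar beta = (N - beta'_q, ..., N - beta'_1)' (zero entries discarded);
   for beta empty this gives the empty partition. *)
Definition barp (N : nat) (b : seq nat) : seq nat :=
  conjp (filter (fun x => 0 < x) (rev [seq N - x | x <- conjp b])).

(* the equivalence on P(N) x Z_{>=0} defining S(N) *)
Definition Sequiv (N : nat) (x y : seq nat * nat) : Prop :=
  forall i, i < N ->
    (x.2%:Z - y.2%:Z = (part x.1 i)%:Z - (part y.1 i)%:Z)%R.

Definition sfun (N : nat) (mu nu : seq nat) : seq nat * nat :=
  (addp mu (barp N nu), part nu 0).

From mathcomp Require Import all_boot all_order all_algebra zify.
Set Implicit Arguments. Unset Strict Implicit.

(* For i < N the (i+1)-th part of mu + bar nu is mu_(i+1) + nu_1 - nu_(N-i).
   As l(mu) + l(nu) <= N, at most one of mu_(i+1) and nu_(N-i) is nonzero, so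
   with t = nu_1 they are the positive and negative parts of a_(i+1) - t, where
   a = mu + bar nu.  These differences are exactly the invariants of the class
   [a, t], which gives injectivity; reading the positive and negative parts off
   an arbitrary representative (a, t) produces the preimage. *)

Definition antitone (s : seq nat) := forall i, nth 0 s i.+1 <= nth 0 s i.

Lemma antitone_nth_le s i j : antitone s -> i <= j -> nth 0 s j <= nth 0 s i.
Proof.
move=> s_anti /subnK <-; elim: (j - i) => [|k IHk] //=.
by rewrite addSn; apply: leq_trans (s_anti _) IHk.
Qed.

Lemma sorted_geq_antitone s : sorted geq s <-> antitone s.
Proof.
split=> [/(sortedP 0) s_sorted i | s_anti]; last first.
  by apply/(sortedP 0) => i _; apply: s_anti.
have [lt_i1_s | le_s_i1] := ltnP i.+1 (size s); first exact: s_sorted.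
by rewrite nth_default.
Qed.

Lemma is_partitionP a :
  is_partition a <-> antitone a /\ (forall i, (0 < part a i) = (i < size a)).
Proof.
rewrite /is_partition /part -sorted_geq_antitone; split.
  move=> /andP[a_sorted a_pos]; split=> // i.
  have [lt_i_a | le_a_i] := ltnP i (size a); last by rewrite nth_default.
  exact: (all_nthP 0 a_pos).
by move=> [a_sorted a_pos]; rewrite a_sorted; apply/(all_nthP 0) => i; rewrite a_pos.
Qed.

Lemma partition_eq a b : is_partition a -> is_partition b ->
  (forall i, part a i = part b i) -> a = b.
Proof.
move=> /is_partitionP[_ a_pos] /is_partitionP[_ b_pos] eq_ab.
have size_ab : size a = size b.
  have := a_pos (size b); have := a_pos (size a).
  by rewrite !eq_ab !b_pos ltnn; lia.
by apply: (eq_from_nth (x0 := 0) size_ab) => i _; apply: eq_ab.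
Qed.

Lemma partition_eq_lt N a b : is_partition a -> is_partition b ->
  size a <= N -> size b <= N -> (forall i, i < N -> part a i = part b i) -> a = b.
Proof.
move=> a_part b_part a_N b_N eq_ab; apply: partition_eq => // i.
have [/eq_ab // | le_N_i] := ltnP i N.
by rewrite /part !nth_default //; lia.
Qed.

Lemma ltn_nth_count s j k : antitone s ->
  (j < nth 0 s k) = (k < count (fun x => j < x) s).
Proof.
elim: s k => [|x s IHs] k s_anti /=; first by rewrite nth_nil.
have s'_anti : antitone s by move=> i; apply: (s_anti i.+1).
have s_le_x i : nth 0 s i <= x by apply: (antitone_nth_le (i := 0) (j := i.+1) s_anti).
have [lt_j_x | le_x_j] /= := ltnP j x.
  by case: k => [|k] //=; rewrite IHs.
have -> : count (fun x => j < x) s = 0.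
  apply/eqP; rewrite -leqn0 leqNgt -has_count; apply/(has_nthP 0) => -[i _].
  by rewrite ltnNge (leq_trans (s_le_x i) le_x_j).
by case: k => [|k]; apply/negbTE; rewrite -leqNgt // (leq_trans (s_le_x k)).
Qed.

Lemma nth_mkseq_dflt (T : Type) (x0 : T) f n i :
  nth x0 (mkseq f n) i = if i < n then f i else x0.
Proof.
by have [/(nth_mkseq x0 f)-> // | le_n_i] := ltnP i n; rewrite nth_default ?size_mkseq.
Qed.

Definition shiftp j (s : seq nat) : seq nat :=
  mkseq (fun k => nth 0 s k - j) (count (fun x => j < x) s).

Lemma part_shiftp j s k : antitone s -> part (shiftp j s) k = nth 0 s k - j.
Proof.
move=> s_anti; rewrite /shiftp /part.
have [lt_k | le_k] := ltnP k (count (fun x => j < x) s); first by rewrite nth_mkseq.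
rewrite nth_default ?size_mkseq //.
by apply/esym/eqP; rewrite subn_eq0 leqNgt ltn_nth_count // -leqNgt.
Qed.

Lemma shiftp_partition j s : antitone s -> is_partition (shiftp j s).
Proof.
move=> s_anti; apply/is_partitionP; split=> [k|k].
  have := part_shiftp j k.+1 s_anti; have := part_shiftp j k s_anti.
  by rewrite /part => -> ->; apply: leq_sub2r.
by rewrite part_shiftp // /shiftp size_mkseq -ltn_nth_count // subn_gt0.
Qed.

Lemma part_conjp a j : antitone a -> part (conjp a) j = count (fun x => j < x) a.
Proof.
move=> a_anti; rewrite /part /conjp.
have [lt_j | le_j] := ltnP j (head 0 a); first by rewrite (nth_map 0) ?size_iota // nth_iota.
rewrite nth_default ?size_map ?size_iota //; apply/esym/eqP; rewrite -leqn0 leqNgt.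
by rewrite -ltn_nth_count // -leqNgt; case: a a_anti le_j.
Qed.

Lemma antitone_conjp a : antitone a -> antitone (conjp a).
Proof.
move=> a_anti j; rewrite -!/(part _ _) !part_conjp //.
by apply: sub_count => x /= /ltnW.
Qed.

Lemma conjp_partition a : antitone a -> is_partition (conjp a).
Proof.
move=> a_anti; apply/is_partitionP; split; first exact: antitone_conjp.
move=> j; rewrite part_conjp // /conjp size_map size_iota.
by rewrite -ltn_nth_count //; case: a a_anti.
Qed.

Definition barp_conj N (b : seq nat) : seq nat :=
  filter (fun x => 0 < x) (rev [seq N - x | x <- conjp b]).

Lemma antitone_barp_conj N b : antitone b -> antitone (barp_conj N b).
Proof.
move=> b_anti; apply/sorted_geq_antitone/sorted_filter; first exact: rev_trans leq_trans.
rewrite rev_sorted sorted_map.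
apply: sub_sorted (proj2 (sorted_geq_antitone _) (antitone_conjp b_anti)).
by move=> x y /= /leq_sub2l.
Qed.

Lemma barp_partition N b : antitone b -> is_partition (barp N b).
Proof. by move=> b_anti; apply/conjp_partition/antitone_barp_conj. Qed.

Lemma size_barp N b : size (barp N b) <= N.
Proof.
rewrite /barp size_map size_iota -/(barp_conj N b).
have : all (fun x => x <= N) (barp_conj N b).
  apply/allP => x; rewrite mem_filter mem_rev => /andP[_ /mapP[y _ ->]].
  exact: leq_subr.
by case: (barp_conj N b) => [|x s] //= /andP[].
Qed.

Lemma count_iota_geq m q : m <= q -> count (fun j => m <= j) (iota 0 q) = q - m.
Proof.
move=> /subnK <-; rewrite addnK addnC iotaD count_cat add0n.
rewrite (@eq_in_count _ _ pred0 (iota 0 m)) ?count_pred0; last first.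
  by move=> x; rewrite mem_iota /=; lia.
rewrite (@eq_in_count _ _ predT) ?count_predT ?size_iota //.
by move=> x; rewrite mem_iota /=; lia.
Qed.

(* The i-th row of bar b has length b_1 - b_(N-i): the complement of the
   (N-i)-th row of b in the N x b_1 rectangle, read after a half-turn. *)
Lemma part_barp N b i : is_partition b -> size b <= N -> i < N ->
  part (barp N b) i = part b 0 - part b (N - i.+1).
Proof.
move=> /is_partitionP[b_anti _] b_N lt_i_N.
rewrite /barp part_conjp ?count_filter; last exact: antitone_barp_conj.
rewrite (@eq_count _ _ (fun x => i < x)); last first.
  by move=> x /=; case: (ltnP i x) => //= lt_i_x; apply: leq_ltn_trans lt_i_x.
rewrite count_rev count_map /conjp count_map.
have -> : head 0 b = part b 0 by case: b {b_anti b_N}.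
rewrite -(count_iota_geq (m := part b (N - i.+1))); last exact: antitone_nth_le.
apply: eq_count => j /=.
rewrite /part [in RHS]leqNgt ltn_nth_count //.
by apply/idP/idP; lia.
Qed.

Lemma part_addp a b i : part (addp a b) i = part a i + part b i.
Proof.
rewrite /addp /part nth_mkseq_dflt; case: ltnP => // le_ab_i.
by rewrite !nth_default //; lia.
Qed.

Lemma addp_partition a b : is_partition a -> is_partition b -> is_partition (addp a b).
Proof.
move=> /is_partitionP[a_anti a_pos] /is_partitionP[b_anti b_pos].
apply/is_partitionP; split=> i; rewrite -?/(part _ _) !part_addp.
  exact: leq_add (a_anti i) (b_anti i).
by rewrite /addp size_mkseq addn_gt0 a_pos b_pos; lia.
Qed.

Lemma part_sfun N mu nu i : inLambda N mu nu -> i < N ->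
  part (sfun N mu nu).1 i = part mu i + (part nu 0 - part nu (N - i.+1)).
Proof. by move=> /and3P[_ nu_part nu_N] lt_i_N; rewrite part_addp part_barp //; lia. Qed.

Lemma inLambda_disjoint N mu nu i : inLambda N mu nu -> i < N ->
  part mu i = 0 \/ part nu (N - i.+1) = 0.
Proof.
move=> /and3P[_ _ size_N] lt_i_N; have [le_mu_i | lt_i_mu] := leqP (size mu) i.
  by left; rewrite /part nth_default.
by right; rewrite /part nth_default //; lia.
Qed.

Lemma sfun_recover N mu nu i : inLambda N mu nu -> i < N ->
  part mu i = part (sfun N mu nu).1 i - (sfun N mu nu).2 /\
  part nu (N - i.+1) = (sfun N mu nu).2 - part (sfun N mu nu).1 i.
Proof.
move=> mu_nu lt_i_N; rewrite part_sfun //; change (sfun N mu nu).2 with (part nu 0).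
have := inLambda_disjoint mu_nu lt_i_N.
have : part nu (N - i.+1) <= part nu 0.
  by case/and3P: mu_nu => _ /is_partitionP[nu_anti _] _; apply: antitone_nth_le.
by lia.
Qed.

Lemma Sequiv_subn N x y i : Sequiv N x y -> i < N ->
  part x.1 i - x.2 = part y.1 i - y.2 /\ x.2 - part x.1 i = y.2 - part y.1 i.
Proof. by move=> /(_ i) xy /xy; lia. Qed.

Lemma sfun_inP N mu nu : inLambda N mu nu -> inP N (sfun N mu nu).1.
Proof.
move=> /and3P[mu_part nu_part size_N]; rewrite /inP addp_partition ?barp_partition //=;
  last by case/is_partitionP: nu_part.
by rewrite /addp size_mkseq geq_max size_barp andbT; lia.
Qed.

Lemma sfun_inj N mu nu mu' nu' : inLambda N mu nu -> inLambda N mu' nu' ->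
  Sequiv N (sfun N mu nu) (sfun N mu' nu') -> mu = mu' /\ nu = nu'.
Proof.
move=> mu_nu mu_nu' equiv.
have recover i : i < N -> part mu i = part mu' i /\ part nu (N - i.+1) = part nu' (N - i.+1).
  move=> lt_i_N; have [-> ->] := sfun_recover mu_nu lt_i_N.
  by have [-> ->] := sfun_recover mu_nu' lt_i_N; apply: Sequiv_subn equiv lt_i_N.
case/and3P: mu_nu => mu_part nu_part size_N.
case/and3P: mu_nu' => mu'_part nu'_part size'_N.
split; apply: (partition_eq_lt (N := N)) => //; try lia.
  by move=> i /recover[].
move=> k lt_k_N; have [_] := recover (N - k.+1) (ltac:(lia)).
by have -> : N - (N - k.+1).+1 = k by lia.
Qed.

Definition preimage_mu (t : nat) (a : seq nat) : seq nat := shiftp t a.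

Definition preimage_nu N (t : nat) (a : seq nat) : seq nat :=
  shiftp 0 (mkseq (fun k => t - part a (N - k.+1)) N).

Lemma antitone_preimage_nu_rows N t a : antitone a ->
  antitone (mkseq (fun k => t - part a (N - k.+1)) N).
Proof.
move=> a_anti k; rewrite !nth_mkseq_dflt; case: ifP => // lt_k1_N.
by rewrite ifT; [apply/leq_sub2l/antitone_nth_le => //; lia | lia].
Qed.

Lemma part_preimage_nu N t a k : antitone a ->
  part (preimage_nu N t a) k = if k < N then t - part a (N - k.+1) else 0.
Proof.
by move=> a_anti; rewrite part_shiftp ?subn0 ?nth_mkseq_dflt //; apply: antitone_preimage_nu_rows.
Qed.

Lemma preimage_inLambda N t a : inP N a ->
  inLambda N (preimage_mu t a) (preimage_nu N t a).
Proof.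
move=> /andP[a_part size_a]; have /is_partitionP[a_anti a_pos] := a_part.
have mu_part : is_partition (preimage_mu t a) by apply: shiftp_partition.
have nu_part : is_partition (preimage_nu N t a).
  exact/shiftp_partition/antitone_preimage_nu_rows.
rewrite /inLambda mu_part nu_part /=.
have /is_partitionP[_ mu_pos] := mu_part; have /is_partitionP[_ nu_pos] := nu_part.
set m := size (preimage_mu t a); set n := size (preimage_nu N t a).
have m_N : m <= N.
  by rewrite leqNgt -mu_pos /preimage_mu part_shiftp // nth_default //; lia.
have n_N : n <= N by rewrite leqNgt -nu_pos part_preimage_nu // ltnn.
rewrite leqNgt; apply/negP => lt_N_mn.
have : 0 < part (preimage_mu t a) m.-1 by rewrite mu_pos; lia.
have : 0 < part (preimage_nu N t a) n.-1 by rewrite nu_pos; lia.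
rewrite part_preimage_nu // ifT; last by lia.
rewrite /preimage_mu part_shiftp // -/(part _ _).
have : part a m.-1 <= part a (N - n.-1.+1) by apply: (antitone_nth_le a_anti); lia.
lia.
Qed.

Lemma preimage_Sequiv N t a : 1 <= N -> inP N a ->
  Sequiv N (sfun N (preimage_mu t a) (preimage_nu N t a)) (a, t).
Proof.
move=> N_gt0 a_inP i lt_i_N; have mu_nu := preimage_inLambda t a_inP.
have /andP[/is_partitionP[a_anti _] _] := a_inP.
rewrite part_sfun //; change (a, t).1 with a; change (a, t).2 with t.
change (sfun N _ (preimage_nu N t a)).2 with (part (preimage_nu N t a) 0).
rewrite /preimage_mu part_shiftp // !part_preimage_nu // N_gt0 ifT; last by lia.
have -> : N - (N - i.+1).+1 = i by lia.
have : part a (N - 1) <= part a i by apply: (antitone_nth_le a_anti); lia.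
by rewrite /part; lia.
Qed.

Theorem lemma1p1 (N : nat) : 1 <= N ->
  (forall mu nu, inLambda N mu nu -> inP N (sfun N mu nu).1) /\
  (forall mu nu mu' nu', inLambda N mu nu -> inLambda N mu' nu' ->
     Sequiv N (sfun N mu nu) (sfun N mu' nu') -> mu = mu' /\ nu = nu') /\
  (forall (a : seq nat) (t : nat), inP N a ->
     exists mu nu, inLambda N mu nu /\ Sequiv N (sfun N mu nu) (a, t)).
Proof.
move=> N_gt0; split; first exact: sfun_inP.
split; first exact: sfun_inj.
move=> a t a_inP; exists (preimage_mu t a), (preimage_nu N t a).
by split; [apply: preimage_inLambda | apply: preimage_Sequiv].
Qed.
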